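(* Let $b$ be a slowly varying function satisfying $\lim_{t\to0^+}b(t)\in(0,\infty)$. Then there is a function $c:(0,\infty)\to(0,\infty)$ satisfying $c\approx b$ on $(0,\infty)$ that has continuous classical derivatives of all orders (i.e. $c\in\mathcal{C}^\infty((0,\infty))$) and that also satisfies $\lim_{t\to0^+}c(t)\in(0,\infty)$. Furthermore, if $b$ is constant on some right neighbourhood of zero, then $c$ can be chosen in such a way that additionally $\lim_{t\to0^+}c^{(n)}(t)=0$ for all integers $n\ge1$.
   Context: A measurable function $b:(0,\infty)\to(0,\infty)$ is called slowly varying if for every $\varepsilon>0$ there exist a non-decreasing function $b_\varepsilon$ and a non-increasing function $b_{-\varepsilon}$ on $(0,\infty)$ such that $t^{\varepsilon}b(t)\approx b_\varepsilon(t)$ and $t^{-\varepsilon}b(t)\approx b_{-\varepsilon}(t)$ on $(0,\infty)$, where $f\approx g$ means $C^{-1}g\le f\le Cg$ for some constant $C\ge1$ independent of the argument. Measurability is with respect to Lebesgue measure. The limit $\lim_{t\to0^+}c(t)$ need not equal $\lim_{t\to0^+}b(t)$. *)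

From mathcomp Require Import all_boot all_order all_algebra.
From mathcomp Require Import all_classical all_reals all_analysis.
Set Implicit Arguments. Unset Strict Implicit. Unset Printing Implicit Defensive.
Import Order.TTheory GRing.Theory Num.Theory.
Import numFieldNormedType.Exports.
Local Open Scope classical_set_scope.
Local Open Scope ring_scope.

Definition pos_halfline (R : realType) : set R := [set t | 0 < t].

(* Lebesgue measurable subsets of R: the Caratheodory-measurable sets for
   Lebesgue outer measure (= the completed Lebesgue sigma-algebra). *)
Definition Lmeasurable (R : realType) (A : set R) : Prop :=
  ((wlength (R:=R) idfun)^*)%mu.-cara.-measurable A.

Definition Lmeasurable_fun (R : realType) (D : set R) (f : R -> R) : Prop :=
  forall B : set R, measurable B -> Lmeasurable (D `&` f @^-1` B).

Definition approx_on (R : realType) (A : set R) (f g : R -> R) : Prop :=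
  exists C : R, 1 <= C /\
    forall t, A t -> C^-1 * g t <= f t /\ f t <= C * g t.

Definition nondecreasing_on (R : realType) (A : set R) (f : R -> R) : Prop :=
  forall s t, A s -> A t -> s <= t -> f s <= f t.

Definition nonincreasing_on (R : realType) (A : set R) (f : R -> R) : Prop :=
  forall s t, A s -> A t -> s <= t -> f t <= f s.

(* b : (0,oo) -> (0,oo) slowly varying (values of b outside (0,oo) are
   irrelevant). *)
Definition slowly_varying (R : realType) (b : R -> R) : Prop :=
  (forall t, 0 < t -> 0 < b t) /\
  Lmeasurable_fun (@pos_halfline R) b /\
  forall eps : R, 0 < eps ->
    (exists bp : R -> R, nondecreasing_on (@pos_halfline R) bp /\
       approx_on (@pos_halfline R) (fun t => t `^ eps * b t) bp) /\
    (exists bm : R -> R, nonincreasing_on (@pos_halfline R) bm /\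
       approx_on (@pos_halfline R) (fun t => t `^ (- eps) * b t) bm).

(* f is C^infty on the open set A: every iterated derivative exists
   (hence is continuous) at every point of A. *)
Definition smooth_on (R : realType) (A : set R) (f : R -> R) : Prop :=
  forall (n : nat) (x : R), A x -> derivable (derive1n n f) x 1.

From mathcomp Require Import all_boot all_order all_algebra.
From mathcomp Require Import all_classical all_reals all_analysis.
From mathcomp Require Import ring lra.
Import Order.TTheory GRing.Theory Num.Theory.
Import numFieldNormedType.Exports.
Local Open Scope classical_set_scope.
Local Open Scope ring_scope.

(* On each interval [e^j, e^(j+1)] let c move from b(e^j) to b(e^(j+1)) along
   a C^oo step S, built from x |-> exp(-1/x), which vanishes on (-oo, 0] and is
   1 on [1, oo).  Near any t > 0 only two consecutive steps are active, so c is
   smooth.  Every value c(t) is a convex combination of b at two points within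
   a factor e of t; slow variation with eps = 1 makes b comparable at such
   points, which gives c ~ b, and the same remark yields lim c = lim b at 0 and
   c constant near 0 when b is. *)

Lemma convex_comb_between (R : realFieldType) (lo hi x y s : R) :
  0 <= s <= 1 -> lo <= x <= hi -> lo <= y <= hi -> lo <= x + (y - x) * s <= hi.
Proof. by move=> /andP[? ?] /andP[? ?] /andP[? ?]; apply/andP; split; nra. Qed.

Section DerivableUpto.
Context {R : realType}.
Implicit Types (f g : R -> R) (n : nat).

Fixpoint derivable_upto n f : Prop :=
  if n is m.+1 then
    exists2 f' : R -> R,
      (forall x : R, is_derive x (1 : R) f (f' x)) & derivable_upto m f'
  else True.

Lemma derivable_uptoW n f : derivable_upto n.+1 f -> derivable_upto n f.
Proof.
elim: n f => [//|n IH] f [f' df f'n].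
by exists f' => //; apply: IH.
Qed.

Lemma derivable_upto_derive1n {n f} :
  derivable_upto n.+1 f -> forall x, derivable (derive1n n f) x 1.
Proof.
elim: n f => [|n IH] f [f' df f'n] x; first by rewrite derive1n0; case: (df x).
have -> : derive1n n.+1 f = derive1n n f'.
  rewrite /derive1n iterSr; congr (iter n _ _); apply/funext => y.
  by rewrite derive1E; case: (df y).
exact: IH.
Qed.

Lemma derivable_upto_cst n (a : R) : derivable_upto n (cst a).
Proof.
elim: n a => [//|n IH] a; exists (cst 0) => // x.
exact: is_derive_cst.
Qed.

Lemma derivable_upto_id n : derivable_upto n id.
Proof.
case: n => [//|n]; exists (cst 1); last exact: derivable_upto_cst.
by move=> x; apply: is_derive_eq.
Qed.

Lemma derivable_uptoD n f g : derivable_upto n f -> derivable_upto n g ->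
  derivable_upto n (fun x => f x + g x).
Proof.
elim: n f g => [//|n IH] f g [f' df f'n] [g' dg g'n].
exists (fun x => f' x + g' x); last exact: IH.
by move=> x; exact: is_deriveD (df x) (dg x).
Qed.

Lemma derivable_uptoN n f : derivable_upto n f -> derivable_upto n (fun x => - f x).
Proof.
elim: n f => [//|n IH] f [f' df f'n].
by exists (fun x => - f' x) => [x|]; [exact: is_deriveN | exact: IH].
Qed.

Lemma derivable_uptoM n f g : derivable_upto n f -> derivable_upto n g ->
  derivable_upto n (fun x => f x * g x).
Proof.
elim: n f g => [//|n IH] f g fn gn.
have [f' df f'n] := fn; have [g' dg g'n] := gn.
exists (fun x => f' x * g x + f x * g' x).
  move=> x; apply: (is_derive_eq (is_deriveM (df x) (dg x))).
  by rewrite /GRing.scale /= addrC mulrC.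
by apply: derivable_uptoD; apply: IH => //; apply: derivable_uptoW.
Qed.

Lemma derivable_uptoV n g : (forall x, g x != 0) -> derivable_upto n g ->
  derivable_upto n (fun x => (g x)^-1).
Proof.
move=> g0; elim: n g g0 => [//|n IH] g g0 gn.
have [g' dg g'n] := gn.
exists (fun x => - (g' x * ((g x)^-1 * (g x)^-1))).
  move=> x; apply: (is_derive_eq (is_deriveV (g0 x) (dg x))).
  by rewrite /GRing.scale /= expr2 invfM mulNr mulrC.
apply/derivable_uptoN/derivable_uptoM => //.
by apply: derivable_uptoM; apply: IH => //; apply: derivable_uptoW.
Qed.

Lemma derivable_upto_comp n f g : derivable_upto n f -> derivable_upto n g ->
  derivable_upto n (fun x => f (g x)).
Proof.
elim: n f g => [//|n IH] f g fn gn.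
have [f' df f'n] := fn; have [g' dg g'n] := gn.
exists (fun x => f' (g x) * g' x).
  move=> x; exact: is_derive1_comp.
by apply: derivable_uptoM => //; apply: IH => //; apply: derivable_uptoW.
Qed.

End DerivableUpto.

Section FlatExp.
Context {R : realType}.
Implicit Types (k : nat) (x h : R).

Definition flat_exp k x : R := if 0 < x then x^-1 ^+ k * expR (- x^-1) else 0.

Lemma flat_exp_le0 k x : x <= 0 -> flat_exp k x = 0.
Proof. by rewrite /flat_exp leNgt => /negbTE ->. Qed.

Lemma flat_exp_gt0 k x : 0 < x -> 0 < flat_exp k x.
Proof. by move=> x0; rewrite /flat_exp x0 mulr_gt0 ?expR_gt0 ?exprn_gt0 ?invr_gt0. Qed.

Lemma flat_exp_ge0 k x : 0 <= flat_exp k x.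
Proof.
by have [/(flat_exp_gt0 k)/ltW//|/(flat_exp_le0 k)->] := ltP 0 x.
Qed.

Lemma flat_exp_quotient_le k h : 0 < h -> h^-1 * flat_exp k h <= k.+2`!%:R * h.
Proof.
move=> h0; rewrite /flat_exp h0 expRN mulrA -exprS.
have y0 : 0 < h^-1 by rewrite invr_gt0.
have expR_ge : h^-1 ^+ k.+2 <= k.+2`!%:R * expR h^-1.
  rewrite mulrC -ler_pdivrMr ?ltr0n ?fact_gt0 //.
  by apply: le_trans (expR_ge1Dxn k.+1 (ltW y0)); rewrite lerDr.
rewrite ler_pdivrMr ?expR_gt0 // -(ler_pM2r y0) -exprSr.
by rewrite mulrAC -(mulrA _ h) divff ?mulr1 ?gt_eqF.
Qed.

Lemma is_derive_flat_exp0 k : is_derive (0 : R) 1 (flat_exp k) 0.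
Proof.
have C0 : 0 < k.+2`!%:R :> R by rewrite ltr0n fact_gt0.
have dq : (fun h => h^-1 *: ((flat_exp k \o shift 0) (h *: 1) - flat_exp k 0))
    @ 0^' --> (0 : R).
  apply/cvgr0Pnorm_lt => e e0; near=> h.
  rewrite /= addr0 scaler1 (@flat_exp_le0 k 0 (lexx 0)) subr0.
  have [h0|h0] := leP h 0; first by rewrite flat_exp_le0 // scaler0 normr0.
  rewrite -[_ *: _]/(h^-1 * flat_exp k h).
  rewrite ger0_norm ?mulr_ge0 ?flat_exp_ge0 ?invr_ge0 ?(ltW h0) //.
  apply: le_lt_trans (flat_exp_quotient_le k _ h0) _.
  rewrite -ltr_pdivlMl //.
  have : `|h| < (k.+2`!%:R)^-1 * e.
    by near: h; apply: dnbhs0_lt; rewrite mulr_gt0 ?invr_gt0.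
  by rewrite gtr0_norm.
apply: DeriveDef; first by apply/cvg_ex; exists 0.
exact: cvg_lim dq.
Unshelve. all: by end_near.
Qed.

Lemma is_derive_flat_exp k x :
  is_derive x 1 (flat_exp k) (- k%:R * flat_exp k.+1 x + flat_exp k.+2 x).
Proof.
have [x0|x0|->] := ltgtP x 0.
- rewrite !flat_exp_le0 ?(ltW x0) // mulr0 addr0.
  apply: (@near_eq_is_derive _ _ _ (cst 0)).
  by apply: filterS (lt_le_nbhsl x0) => y /(flat_exp_le0 k).
- pose g (y : R) := y^-1 ^+ k * expR (- y^-1).
  have dV : is_derive x 1 (fun y : R => y^-1) (- x ^- 2).
    by apply: (is_derive_eq (is_deriveV _ (is_derive_id x 1)));
      rewrite ?gt_eqF // scaler1.
  have dE : is_derive x 1 (fun y : R => expR (- y^-1)) (expR (- x^-1) * x ^- 2).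
    by apply: is_derive1_comp; rewrite -[x ^- 2]opprK; exact: is_deriveN dV.
  have dX : is_derive x 1 (fun y : R => y^-1 ^+ k) (k%:R * x^-1 ^+ k.-1 *: - x ^- 2).
    by rewrite -exprfctE; exact: is_deriveX.
  have dg : is_derive x 1 g (- k%:R * flat_exp k.+1 x + flat_exp k.+2 x).
    apply: (is_derive_eq (is_deriveM dX dE)).
    rewrite /flat_exp x0 -exprVn /GRing.scale /=.
    by case: k {g dX} => [|k];
      rewrite ?mul0r ?oppr0 ?mul0r ?add0r //= !exprS ?expr0; ring.
  apply: near_eq_is_derive dg.
  by apply: filterS (lt_nbhsr x0) => y y0; rewrite /g /flat_exp y0.
- by rewrite !flat_exp_le0 // mulr0 addr0; exact: is_derive_flat_exp0.
Qed.

End FlatExp.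

Section DerivativesLocal.
Context {R : realType}.

Lemma derive1n_cst n (a : R) : derive1n n.+1 (cst a) = cst 0.
Proof.
elim: n => [|n IH]; apply/funext => x; first by rewrite derive1n1 derive1_cst.
by rewrite derive1nS IH derive1_cst.
Qed.

Lemma derive1n_eq_in_itvoo n {a c : R} {f g : R -> R} :
  {in `]a, c[, f =1 g} -> {in `]a, c[, derive1n n f =1 derive1n n g}.
Proof.
move=> fg; elim: n => [|n IH] y ay; first by rewrite !derive1n0 fg.
rewrite !derive1nS !derive1E; apply: near_eq_derive.
exact: filterS (near_in_itvoo ay) => z /IH.
Qed.

End DerivativesLocal.

Section SmoothStep.
Context {R : realType}.
Implicit Types x : R.

Definition smooth_step x : R := flat_exp 0 x / (flat_exp 0 x + flat_exp 0 (1 - x)).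

Lemma smooth_step_den_gt0 x : 0 < flat_exp 0 x + flat_exp 0 (1 - x).
Proof.
have [x0|x0] := ltP 0 x.
  by apply: lt_le_trans (flat_exp_gt0 0 _ x0) _; rewrite lerDl flat_exp_ge0.
have x1 : 0 < 1 - x by rewrite subr_gt0 (le_lt_trans x0).
by apply: lt_le_trans (flat_exp_gt0 0 _ x1) _; rewrite lerDr flat_exp_ge0.
Qed.

Lemma smooth_step_le0 x : x <= 0 -> smooth_step x = 0.
Proof. by move=> x0; rewrite /smooth_step flat_exp_le0 // mul0r. Qed.

Lemma smooth_step_ge1 x : 1 <= x -> smooth_step x = 1.
Proof.
move=> x1; rewrite /smooth_step (@flat_exp_le0 _ 0 (1 - x)) ?subr_le0 // addr0.
by rewrite divff // gt_eqF // flat_exp_gt0 // (lt_le_trans ltr01).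
Qed.

Lemma smooth_step_itv x : 0 <= smooth_step x <= 1.
Proof.
have den0 := smooth_step_den_gt0 x.
rewrite /smooth_step divr_ge0 ?flat_exp_ge0 ?(ltW den0) //=.
by rewrite ler_pdivrMr // mul1r lerDl flat_exp_ge0.
Qed.

Lemma derivable_upto_flat_exp n k : derivable_upto n (@flat_exp R k).
Proof.
elim: n k => [//|n IH] k.
exists (fun x => - k%:R * flat_exp k.+1 x + flat_exp k.+2 x).
  exact: is_derive_flat_exp.
apply: derivable_uptoD => //.
by apply: derivable_uptoM; first exact: derivable_upto_cst.
Qed.

Lemma derivable_upto_smooth_step n : derivable_upto n smooth_step.
Proof.
apply: derivable_uptoM; first exact: derivable_upto_flat_exp.
apply: derivable_uptoV; first by move=> x; rewrite gt_eqF ?smooth_step_den_gt0.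
apply: derivable_uptoD; first exact: derivable_upto_flat_exp.
apply: derivable_upto_comp (derivable_upto_flat_exp _ _) _.
apply: derivable_uptoD; first exact: derivable_upto_cst.
exact: derivable_uptoN (derivable_upto_id _).
Qed.

End SmoothStep.

Section LogInterp.
Context {R : realType}.
Variable b : R -> R.
Implicit Types (j k : int) (s t : R).

Definition knot j : R := expR j%:~R.

Definition phase j t : R := (t / knot j - 1) / (expR 1 - 1).

Definition log_interp t : R :=
  let j := Num.floor (ln t) in
  b (knot j) + (b (knot (j + 1)) - b (knot j)) * smooth_step (phase j t).

(* On ]e^(k-1), e^(k+1)[ only the steps starting at e^(k-1) and e^k are active. *)
Definition log_interp_local k t : R :=
  b (knot (k - 1)) + (b (knot k) - b (knot (k - 1))) * smooth_step (phase (k - 1) t)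
  + (b (knot (k + 1)) - b (knot k)) * smooth_step (phase k t).

Lemma knot_gt0 j : 0 < knot j.
Proof. exact: expR_gt0. Qed.

Lemma knotS j : knot (j + 1) = expR 1 * knot j.
Proof. by rewrite /knot intrD expRD mulrC. Qed.

Lemma knot_ltS j : knot j < knot (j + 1).
Proof. by rewrite knotS ltr_pMl ?knot_gt0 ?expR_gt1. Qed.

Lemma knot_floor_ln {t} : 0 < t ->
  knot (Num.floor (ln t)) <= t < knot (Num.floor (ln t) + 1).
Proof.
move=> t0; rewrite /knot -[in X in _ <= X < _](lnK t0).
by rewrite ler_expR ltr_expR floor_le floorD1_gt.
Qed.

Lemma floor_ln_knot {j t} : knot j <= t < knot (j + 1) -> Num.floor (ln t) = j.
Proof.
move=> /andP[jt tj]; have t0 := lt_le_trans (knot_gt0 j) jt.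
by apply: floor_def; rewrite -ler_expR -ltr_expR lnK ?jt.
Qed.

Lemma phase_le0 j t : t <= knot j -> phase j t <= 0.
Proof.
move=> tj; rewrite /phase pmulr_lle0 ?invr_gt0 ?subr_gt0 ?expR_gt1 //.
by rewrite subr_le0 ler_pdivrMr ?knot_gt0 // mul1r.
Qed.

Lemma phase_ge1 j t : knot (j + 1) <= t -> 1 <= phase j t.
Proof.
rewrite knotS => jt; rewrite /phase ler_pdivlMr ?subr_gt0 ?expR_gt1 // mul1r.
by rewrite lerD2r ler_pdivlMr ?knot_gt0.
Qed.

Lemma log_interp_cell {j t} : knot j <= t < knot (j + 1) ->
  log_interp t = b (knot j) + (b (knot (j + 1)) - b (knot j)) * smooth_step (phase j t).
Proof. by move=> jt; rewrite /log_interp (floor_ln_knot jt). Qed.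

Lemma log_interp_localE k :
  {in `]knot (k - 1), knot (k + 1)[, log_interp =1 log_interp_local k}.
Proof.
move=> t; rewrite in_itv /= => /andP[kt tk]; rewrite /log_interp_local.
have [kt'|tk'] := leP (knot k) t.
  have step1 : smooth_step (phase (k - 1) t) = 1.
    by apply: smooth_step_ge1; apply: phase_ge1; rewrite subrK.
  have cell : knot k <= t < knot (k + 1) by rewrite kt' tk.
  by rewrite (log_interp_cell cell) step1 mulr1 subrKC.
have step0 : smooth_step (phase k t) = 0 by apply/smooth_step_le0/phase_le0/ltW.
have cell : knot (k - 1) <= t < knot (k - 1 + 1) by rewrite subrK (ltW kt) tk'.
by rewrite (log_interp_cell cell) subrK step0 mulr0 addr0.
Qed.

Lemma derivable_upto_log_interp_local n k : derivable_upto n (log_interp_local k).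
Proof.
have phase_n j : derivable_upto n (phase j).
  apply: derivable_uptoM; last exact: derivable_upto_cst.
  apply: derivable_uptoD; last exact: derivable_upto_cst.
  by apply: derivable_uptoM; [exact: derivable_upto_id | exact: derivable_upto_cst].
have step_n j : derivable_upto n (fun t => smooth_step (phase j t)).
  exact: derivable_upto_comp (derivable_upto_smooth_step n) (phase_n j).
apply: derivable_uptoD; last exact: derivable_uptoM (derivable_upto_cst _ _) (step_n k).
apply: derivable_uptoD; first exact: derivable_upto_cst.
exact: derivable_uptoM (derivable_upto_cst _ _) (step_n (k - 1)).
Qed.

Lemma log_interp_smooth_on : smooth_on (@pos_halfline R) log_interp.
Proof.
move=> n x x0; have /andP[kx xk] := knot_floor_ln x0.
set k := Num.floor (ln x) in kx xk.
have {kx xk} xk : x \in `]knot (k - 1), knot (k + 1)[.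
  by rewrite in_itv /= xk andbT (lt_le_trans _ kx) // -{2}(subrK 1 k) knot_ltS.
have local_eq := derive1n_eq_in_itvoo n (log_interp_localE k).
have := derivable_upto_derive1n (derivable_upto_log_interp_local n.+1 k) x.
apply: near_eq_derivable.
near=> y; apply/esym/local_eq; near: y; exact: near_in_itvoo.
Unshelve. all: by end_near.
Qed.

Lemma log_interp_between t lo hi : 0 < t ->
  (forall s, 0 < s -> s <= expR 1 * t -> t <= expR 1 * s -> lo <= b s <= hi) ->
  lo <= log_interp t <= hi.
Proof.
move=> t0 hb; have /andP[jt tj] := knot_floor_ln t0.
rewrite /log_interp; set j := Num.floor (ln t) in jt tj *.
have e1 : 1 <= expR 1 :> R by rewrite -expR0 ler_expR.
apply: convex_comb_between (smooth_step_itv _) _ _; apply: hb.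
- exact: knot_gt0.
- exact: le_trans jt (ler_peMl (ltW t0) e1).
- by rewrite -knotS ltW.
- exact: knot_gt0.
- by rewrite knotS ler_pM2l ?expR_gt0.
- exact: le_trans (ltW tj) (ler_peMl (ltW (knot_gt0 _)) e1).
Qed.

Lemma log_interp_cvg0 (l : R) :
  b t @[t --> 0^'+] --> l -> log_interp t @[t --> 0^'+] --> l.
Proof.
move=> /cvgrPdist_le bl; apply/cvgrPdist_le => e e0.
have [d /= d0 near_l] := bl e e0.
have de0 : 0 < d / expR 1 by rewrite divr_gt0 ?expR_gt0.
near=> t; have t0 : 0 < t by near: t; exact: nbhs_right_gt.
have td : t < d / expR 1 by near: t; exact: nbhs_right_lt.
rewrite ler_distlC; apply: log_interp_between (t0) _ => s s0 ste _.
rewrite -ler_distlC; apply: near_l => //=.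
rewrite sub0r normrN gtr0_norm //; apply: le_lt_trans ste _.
by rewrite mulrC -ltr_pdivlMr ?expR_gt0.
Unshelve. all: by end_near.
Qed.

Lemma log_interp_eq_near0 (d k : R) : (forall t, 0 < t < d -> b t = k) ->
  forall t, 0 < t < d / expR 1 -> log_interp t = k.
Proof.
move=> bk t /andP[t0 td]; apply/esym/le_anti.
apply: log_interp_between (t0) _ => s s0 ste _.
rewrite bk ?lexx // s0 (le_lt_trans ste) //.
by rewrite mulrC -ltr_pdivlMr ?expR_gt0.
Qed.

Lemma log_interp_derive1n_cvg0 (d k : R) n :
  0 < d -> (forall t, 0 < t < d -> b t = k) ->
  derive1n n.+1 log_interp t @[t --> 0^'+] --> 0.
Proof.
move=> d0 bk; have de0 : 0 < d / expR 1 by rewrite divr_gt0 ?expR_gt0.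
have cst_near0 : {in `]0, d / expR 1[, log_interp =1 cst k}.
  by move=> t; rewrite in_itv; exact: log_interp_eq_near0.
apply: cvg_near_cst; near=> t.
rewrite (derive1n_eq_in_itvoo n.+1 cst_near0) ?derive1n_cst // in_itv /=.
by apply/andP; split; near: t; [exact: nbhs_right_gt | exact: nbhs_right_lt].
Unshelve. all: by end_near.
Qed.

End LogInterp.

Section Comparison.
Context {R : realType}.
Implicit Types (A : set R) (f g : R -> R).

Lemma approx_nondecreasing {A f g} : approx_on A f g -> nondecreasing_on A g ->
  exists2 C, 1 <= C & forall s t, A s -> A t -> s <= t -> f s <= C * f t.
Proof.
move=> [C [C1 fg]] g_nd; have C0 : 0 < C := lt_le_trans ltr01 C1.
exists (C * C) => [|s t As At st]; first exact: mulr_ege1.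
have [_ fsC] := fg s As; have [gtC _] := fg t At.
apply: (le_trans fsC); rewrite -mulrA ler_pM2l //.
by apply: le_trans (g_nd s t As At st) _; rewrite -ler_pdivrMl.
Qed.

Lemma approx_nonincreasing {A f g} : approx_on A f g -> nonincreasing_on A g ->
  exists2 C, 1 <= C & forall s t, A s -> A t -> s <= t -> f t <= C * f s.
Proof.
move=> [C [C1 fg]] g_ni; have C0 : 0 < C := lt_le_trans ltr01 C1.
exists (C * C) => [|s t As At st]; first exact: mulr_ege1.
have [_ ftC] := fg t At; have [gsC _] := fg s As.
apply: (le_trans ftC); rewrite -mulrA ler_pM2l //.
by apply: le_trans (g_ni s t As At st) _; rewrite -ler_pdivrMl.
Qed.

End Comparison.

Section SlowlyVarying.
Context {R : realType}.
Variable b : R -> R.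
Hypothesis bsv : slowly_varying b.

(* With eps = 1: t b(t) is almost nondecreasing and b(t) / t almost
   nonincreasing. *)
Lemma slowly_varying_comparable : exists2 K, 1 <= K &
  forall s t, 0 < s -> 0 < t -> s <= expR 1 * t -> t <= expR 1 * s -> b s <= K * b t.
Proof.
have [b0 [_ sv]] := bsv.
have [[bp [bp_nd bp_approx]] [bm [bm_ni bm_approx]]] := sv 1 ltr01.
have [C1 C11 up] := approx_nondecreasing bp_approx bp_nd.
have [C2 C21 down] := approx_nonincreasing bm_approx bm_ni.
have e0 : 0 < expR 1 :> R := expR_gt0 1.
exists (C1 * C2 * expR 1); first by rewrite !mulr_ege1 // -expR0 ler_expR.
move=> s t s0 t0 ste tse; have bt0 := ltW (b0 t t0).
have scale u v C : 0 < u -> 0 <= C -> C <= C1 * C2 -> v <= expR 1 * u ->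
    u * b s <= C * (v * b t) -> b s <= C1 * C2 * expR 1 * b t.
  move=> u0 C0 CC vu sb; rewrite -(ler_pM2l u0); apply: le_trans sb _.
  have : 0 <= C * b t * (expR 1 * u - v) by rewrite !mulr_ge0 // subr_ge0.
  have : 0 <= (C1 * C2 - C) * expR 1 * u * b t.
    by rewrite !mulr_ge0 ?subr_ge0 ?expR_ge0 ?(ltW u0).
  nra.
have [st|ts] := leP s t.
- apply: (scale s t C1) => //; first exact: le_trans ler01 C11.
    by rewrite ler_peMr // (le_trans ler01 C11).
  by have := up s t s0 t0 st; rewrite (powRr1 (ltW s0)) (powRr1 (ltW t0)).
- apply: (scale s^-1 t^-1 C2); rewrite ?invr_gt0 //; first exact: le_trans ler01 C21.
    by rewrite ler_peMl // (le_trans ler01 C21).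
  + have -> : t^-1 = s / t * s^-1 by rewrite mulrAC divff ?gt_eqF ?mul1r.
    by rewrite ler_pM2r ?invr_gt0 // ler_pdivrMr.
  + have := down t s t0 s0 (ltW ts).
    by rewrite (powR_inv1 (ltW s0)) (powR_inv1 (ltW t0)).
Qed.

Lemma log_interp_approx : approx_on (@pos_halfline R) (log_interp b) b.
Proof.
have [K K1 cmp] := slowly_varying_comparable.
have K0 : 0 < K := lt_le_trans ltr01 K1.
exists K; split => // t t0; apply/andP.
apply: log_interp_between (t0) _ => s s0 ste tse.
by rewrite ler_pdivrMl // !cmp.
Qed.

Lemma log_interp_gt0 t : 0 < t -> 0 < log_interp b t.
Proof.
move=> t0; have [K [K1 /(_ t t0) [bK _]]] := log_interp_approx.
by apply: lt_le_trans bK; rewrite mulr_gt0 ?invr_gt0 ?(lt_le_trans ltr01 K1) ?bsv.1.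
Qed.

End SlowlyVarying.

Theorem lemma3p3 (R : realType) (b : R -> R) :
  slowly_varying b ->
  (exists l : R, 0 < l /\ b t @[t --> 0^'+] --> l) ->
  exists c : R -> R,
    (forall t, 0 < t -> 0 < c t) /\
    approx_on (@pos_halfline R) c b /\
    smooth_on (@pos_halfline R) c /\
    (exists l : R, 0 < l /\ c t @[t --> 0^'+] --> l) /\
    ((exists delta : R, 0 < delta /\ exists k : R,
        forall t, 0 < t < delta -> b t = k) ->
     forall n : nat, (1 <= n)%N -> derive1n n c t @[t --> 0^'+] --> 0).
Proof.
move=> bsv [l [l0 bl]]; exists (log_interp b).
split; first exact: log_interp_gt0.
split; first exact: log_interp_approx.
split; first exact: log_interp_smooth_on.
split; first by exists l; split => //; exact: log_interp_cvg0.
by move=> [d [d0 [k bk]]] [//|n] _; exact: log_interp_derive1n_cvg0 d0 bk.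
Qed.
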